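(* If $G$ is a clique-uniform graph with respect to a clique partition $F$, with clique partition graph $P_G$, then $\mathcal E(\mathcal R_F)=\mathcal E(P_G)$.
   Context: All graphs are finite and simple, $V(G)=\{1,\dots,n\}$. A clique partition of $G$ is a set $F=\{C_1,\dots,C_k\}$ of cliques such that every edge lies in exactly one $C_j$; $G$ is clique-uniform if all $|C_j|$ are equal. $\mathcal M_F$ is the $n\times k$ $(0,1)$-matrix with $(i,j)$-entry $1$ iff $i\in C_j$, and $\mathcal R_F=\mathcal M_F^T\mathcal M_F$. The clique partition graph $P_G$ has vertex set $\{1,\dots,k\}$ with $i\neq j$ adjacent iff $C_i\cap C_j\neq\emptyset$. With $s_i^F=|C_i|$, $\mathcal E(\mathcal R_F)=\sum_{i=1}^k|\lambda_i(\mathcal R_F)-\frac1k\sum_{j=1}^k s_j^F|$, and $\mathcal E(P_G)=\sum_{i=1}^k|\lambda_i(P_G)|$ is the sum of absolute values of adjacency eigenvalues. *)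

From HB Require Import structures.
From mathcomp Require Import all_boot all_order all_algebra all_field.
Set Implicit Arguments. Unset Strict Implicit. Unset Printing Implicit Defensive.
Import Order.TTheory GRing.Theory Num.Theory.
Local Open Scope ring_scope.

(* A simple graph on V(G) = 'I_n (i.e. {1..n} shifted to {0..n-1}):
   a symmetric irreflexive relation. *)
Definition simple_graph (n : nat) (adj : rel 'I_n) : Prop :=
  irreflexive adj /\ symmetric adj.

Definition is_clique (n : nat) (adj : rel 'I_n) (C : {set 'I_n}) : Prop :=
  forall u v, u \in C -> v \in C -> u != v -> adj u v.

(* F = {C_1,...,C_k} given as an injective family C : 'I_k -> {set 'I_n}
   (injective because F is a *set* of cliques); every edge lies in exactly
   one C_j. *)
Definition clique_partition (n k : nat) (adj : rel 'I_n)
  (C : 'I_k -> {set 'I_n}) : Prop :=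
  injective C /\ (forall j, is_clique adj (C j)) /\
  (forall u v, adj u v -> exists! j, (u \in C j) && (v \in C j)).

Definition clique_uniform (n k : nat) (C : 'I_k -> {set 'I_n}) : Prop :=
  forall i j, #|C i| = #|C j|.

Definition incM (n k : nat) (C : 'I_k -> {set 'I_n}) : 'M[algC]_(n, k) :=
  \matrix_(i < n, j < k) (i \in C j)%:R.

Definition RF (n k : nat) (C : 'I_k -> {set 'I_n}) : 'M[algC]_k :=
  (incM C)^T *m incM C.

Definition PG_adj (n k : nat) (C : 'I_k -> {set 'I_n}) : 'M[algC]_k :=
  \matrix_(i < k, j < k) ((i != j) && (C i :&: C j != set0))%:R.

(* The eigenvalues of a square matrix, listed with algebraic multiplicity:
   a sequence rs with char_poly A = \prod_(r <- rs) ('X - r) (char_poly is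
   monic, so its leading coefficient is 1). *)
Definition eigenvalues (k : nat) (A : 'M[algC]_k) : seq algC :=
  sval (closed_field_poly_normal (char_poly A)).

Definition energyRF (n k : nat) (C : 'I_k -> {set 'I_n}) : algC :=
  \sum_(l <- eigenvalues (RF C))
     `| l - (k%:R)^-1 * \sum_(j < k) (#|C j|)%:R |.

Definition energyPG (n k : nat) (C : 'I_k -> {set 'I_n}) : algC :=
  \sum_(l <- eigenvalues (PG_adj C)) `| l |.

(* Two distinct cliques of a clique partition share at most one vertex, since
   a shared edge would lie in both.  Hence the off-diagonal entries
   |C_i ∩ C_j| of R_F are exactly the adjacency matrix of P_G, and when all
   cliques have size s the diagonal is s = (1/k) Σ_j s_j, i.e.
   R_F = s I + A(P_G).  Adding s I shifts every eigenvalue by s, so the two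
   energies are the same sum. *)
From mathcomp Require Import all_boot all_order all_algebra all_field.
Import Order.TTheory GRing.Theory Num.Theory.
Local Open Scope ring_scope.

Lemma char_poly_scalar_add (R : comNzRingType) k (a : R) (A : 'M[R]_k) :
  char_poly (a%:M + A) = char_poly A \Po ('X - a%:P).
Proof.
rewrite /char_poly -det_map_mx; congr (\det _); apply/matrixP => i j.
rewrite !mxE rmorphB /= rmorphMn /= comp_polyX comp_polyC.
case: eqP => _; last by rewrite !mulr0n !add0r.
by rewrite !mulr1n polyCD opprD addrA.
Qed.

Lemma eigenvaluesP k (A : 'M[algC]_k) :
  char_poly A = \prod_(z <- eigenvalues A) ('X - z%:P).
Proof.
rewrite /eigenvalues; case: (closed_field_poly_normal _) => rs /= ->.
by rewrite (monicP (char_poly_monic A)) scale1r.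
Qed.

Lemma eigenvalues_scalar_add k (a : algC) (A : 'M[algC]_k) :
  perm_eq (eigenvalues (a%:M + A)) [seq z + a | z <- eigenvalues A].
Proof.
apply: prod_XsubC_eq.
rewrite -eigenvaluesP char_poly_scalar_add eigenvaluesP rmorph_prod big_map.
apply: eq_bigr => z _.
by rewrite rmorphB /= comp_polyX comp_polyC polyCD opprD addrA addrAC.
Qed.

Lemma sum_eigenvalues_scalar_add k (a : algC) (A : 'M[algC]_k) :
  \sum_(z <- eigenvalues (a%:M + A)) `|z - a| = \sum_(z <- eigenvalues A) `|z|.
Proof.
rewrite (perm_big _ (eigenvalues_scalar_add _ a A)) big_map.
by apply: eq_bigr => z _; rewrite addrK.
Qed.

Section CliquePartition.

Context {n k : nat} {adj : rel 'I_n} {C : 'I_k -> {set 'I_n}}.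

Lemma RF_cardI i j : RF C i j = #|C i :&: C j|%:R.
Proof.
rewrite !mxE -sum1_card natr_sum [RHS]big_mkcond /=.
by apply: eq_bigr => v _; rewrite !mxE inE -natrM mulnb; case: andb.
Qed.

Lemma clique_partition_cardI_le1 i j :
  clique_partition adj C -> i != j -> (#|C i :&: C j| <= 1)%N.
Proof.
move=> [_ [cliqueC edge_unique]] neq_ij; rewrite leqNgt.
apply/card_gt1P => -[u [v [+ + neq_uv]]]; rewrite !inE => /andP[ui uj] /andP[vi vj].
have [l [_ only_l]] := edge_unique u v (cliqueC i u v ui vi neq_uv).
by move/eqP: neq_ij; rewrite -(only_l i) ?ui ?vi // -(only_l j) ?uj ?vj.
Qed.

Lemma mean_clique_size_uniform i :
  clique_uniform C -> (k%:R)^-1 * \sum_(j < k) #|C j|%:R = #|C i|%:R :> algC.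
Proof.
move=> unifC; under eq_bigr => j _ do rewrite (unifC j i).
rewrite sumr_const card_ord -[_%:R *+ k]mulr_natl mulrA mulVf ?mul1r //.
by rewrite pnatr_eq0 -lt0n (leq_ltn_trans _ (ltn_ord i)).
Qed.

Lemma RF_scalar_add_PG_adj :
  clique_partition adj C -> clique_uniform C ->
  RF C = ((k%:R)^-1 * \sum_(j < k) #|C j|%:R)%:M + PG_adj C.
Proof.
move=> partC unifC; apply/matrixP => i j.
rewrite RF_cardI !mxE (mean_clique_size_uniform i unifC).
have [<- | neq_ij] := eqVneq i j; first by rewrite setIid mulr1n addr0.
rewrite add0r /= -cards_eq0.
by case: #|_| (clique_partition_cardI_le1 i j partC neq_ij) => [|[|]].
Qed.

End CliquePartition.

Theorem mainTheorem10 (n k : nat) (adj : rel 'I_n) (C : 'I_k -> {set 'I_n}) :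
  simple_graph adj ->
  clique_partition adj C ->
  clique_uniform C ->
  energyRF C = energyPG C.
Proof.
move=> _ partC unifC.
by rewrite /energyRF (RF_scalar_add_PG_adj partC unifC) sum_eigenvalues_scalar_add.
Qed.
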